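(* Let $\gamma=(1+\sqrt5)/2$ and let $(r_i)_{i\ge0}$ be a sequence of positive real numbers. Suppose there are constants $c_1,c_2>0$ such that $c_1r_ir_{i+1}\le r_{i+2}\le c_2r_ir_{i+1}$ for all $i\ge0$. Then there are constants $c_3,c_4>0$ such that $c_3r_i^\gamma\le r_{i+1}\le c_4r_i^\gamma$ for all $i\ge0$. *)

From Stdlib Require Import Reals.
Open Scope R_scope.

Definition golden : R := (1 + sqrt 5) / 2.

(* Taking logarithms, s_i = ln r_i satisfies s_(i+2) = s_(i+1) + s_i + e_i with e_i
   bounded.  The deviation t_i = s_(i+1) - gamma s_i from the dominant eigendirection
   of this linear recurrence then obeys t_(i+1) = e_i - (gamma - 1) t_i, and since
   gamma - 1 = 1/gamma lies in (0, 1) the sequence t stays bounded, say |t_i| <= M.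
   As r_(i+1) = exp t_i * r_i^gamma, the constants exp (-M) and exp M work. *)

From Stdlib Require Import Reals Lra.
Open Scope R_scope.

Lemma ln_le x y : 0 < x -> x <= y -> ln x <= ln y.
Proof.
  intros Hx Hxy; apply Rnot_lt_le; intros Hlt.
  apply (Rlt_not_le _ _ (ln_lt_inv y x ltac:(lra) Hx Hlt) Hxy).
Qed.

Lemma exp_le x y : x <= y -> exp x <= exp y.
Proof.
  intros Hxy; apply Rnot_lt_le; intros Hlt.
  apply (Rlt_not_le _ _ (exp_lt_inv y x Hlt) Hxy).
Qed.

Lemma golden_mul_pred : golden * (golden - 1) = 1.
Proof.
  unfold golden.
  assert (H5 : sqrt 5 * sqrt 5 = 5) by (apply sqrt_sqrt; lra).
  nra.
Qed.

Lemma golden_pred_bounds : 0 < golden - 1 < 1.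
Proof.
  unfold golden.
  assert (H5 : sqrt 5 * sqrt 5 = 5) by (apply sqrt_sqrt; lra).
  assert (H0 : 0 <= sqrt 5) by apply sqrt_pos.
  split; nra.
Qed.

Lemma golden_deviation_recurrence a b c :
  c - golden * b = (c - b - a) - (golden - 1) * (b - golden * a).
Proof.
  transitivity (c - b - a - (golden - 1) * b + golden * (golden - 1) * a);
    [rewrite golden_mul_pred|]; ring.
Qed.

Lemma bounded_of_contractive_step (t : nat -> R) (K q : R) :
  0 <= K -> 0 <= q < 1 ->
  (forall i, Rabs (t (S i)) <= K + q * Rabs (t i)) ->
  forall i, Rabs (t i) <= Rabs (t 0%nat) + K / (1 - q).
Proof.
  intros HK Hq Hstep.
  set (B := Rabs (t 0%nat) + K / (1 - q)).
  assert (HB : K + q * B <= B).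
  { assert (Hfix : (1 - q) * (K / (1 - q)) = K) by (field; lra).
    assert (H0 : 0 <= Rabs (t 0%nat)) by apply Rabs_pos.
    unfold B; nra. }
  induction i as [|i IH].
  - assert (0 <= K / (1 - q)) by (apply Rle_mult_inv_pos; lra).
    unfold B; lra.
  - specialize (Hstep i); nra.
Qed.

Lemma abs_ln_ratio_le (a b u x : R) :
  0 < a -> 0 < u -> a * u <= x <= b * u ->
  Rabs (ln x - ln u) <= Rmax (Rabs (ln a)) (Rabs (ln b)).
Proof.
  intros Ha Hu [Hlo Hhi].
  assert (Hau : 0 < a * u) by (apply Rmult_lt_0_compat; lra).
  assert (Hb : 0 < b) by (apply (Rmult_lt_reg_r u); lra).
  assert (Hlow := ln_le _ _ Hau Hlo).
  assert (Hhigh := ln_le x (b * u) ltac:(lra) Hhi).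
  rewrite !ln_mult in Hlow, Hhigh by lra.
  apply RmaxAbs; lra.
Qed.

Lemma Rpower_sandwich (x y a M : R) :
  0 < y -> Rabs (ln y - a * ln x) <= M ->
  exp (- M) * Rpower x a <= y <= exp M * Rpower x a.
Proof.
  intros Hy Hdev.
  assert (Hy_eq : y = exp (ln y - a * ln x) * Rpower x a).
  { unfold Rpower; rewrite <- exp_plus, Rplus_comm, Rplus_minus, exp_ln; auto. }
  assert (Hpos : 0 < Rpower x a) by apply exp_pos.
  assert (Hlo := Rle_abs (- (ln y - a * ln x))); rewrite Rabs_Ropp in Hlo.
  assert (Hhi := Rle_abs (ln y - a * ln x)).
  rewrite Hy_eq.
  split; apply Rmult_le_compat_r, exp_le; lra.
Qed.

Theorem lemma5p2 (r : nat -> R) (c1 c2 : R) :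
  (forall i, 0 < r i) ->
  0 < c1 -> 0 < c2 ->
  (forall i, c1 * r i * r (S i) <= r (S (S i)) /\ r (S (S i)) <= c2 * r i * r (S i)) ->
  exists c3 c4 : R, 0 < c3 /\ 0 < c4 /\
    forall i, c3 * Rpower (r i) golden <= r (S i) /\ r (S i) <= c4 * Rpower (r i) golden.
Proof.
  intros Hr Hc1 _ Hrec.
  set (K := Rmax (Rabs (ln c1)) (Rabs (ln c2))).
  set (t i := ln (r (S i)) - golden * ln (r i)).
  assert (HK : 0 <= K) by (eapply Rle_trans; [apply Rabs_pos | apply Rmax_l]).
  assert (Hstep : forall i, Rabs (t (S i)) <= K + (golden - 1) * Rabs (t i)).
  { intro i.
    assert (He : Rabs (ln (r (S (S i))) - ln (r (S i)) - ln (r i)) <= K).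
    { assert (Hu : 0 < r i * r (S i)) by (apply Rmult_lt_0_compat; apply Hr).
      replace (ln (r (S (S i))) - ln (r (S i)) - ln (r i))
        with (ln (r (S (S i))) - ln (r i * r (S i))) by (rewrite ln_mult by apply Hr; ring).
      apply abs_ln_ratio_le; [lra | exact Hu | rewrite <- !Rmult_assoc; apply Hrec]. }
    unfold t at 1; rewrite (golden_deviation_recurrence (ln (r i))); fold (t i).
    eapply Rle_trans; [apply Rabs_triang|].
    rewrite Rabs_Ropp, Rabs_mult, (Rabs_pos_eq (golden - 1)) by (pose proof golden_pred_bounds; lra).
    apply Rplus_le_compat_r, He. }
  set (M := Rabs (t 0%nat) + K / (1 - (golden - 1))).
  exists (exp (- M)), (exp M); split; [apply exp_pos|]; split; [apply exp_pos|].
  intro i; apply Rpower_sandwich; try apply Hr.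
  apply (bounded_of_contractive_step t K (golden - 1)); auto.
  pose proof golden_pred_bounds; lra.
Qed.
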